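(* Suppose each firm $i$'s payoff is $$\pi_i(\boldsymbol{x})=\alpha_0+\alpha_1x_i-\frac{\alpha_2}{2}x_i^2+\beta_1\sum_{j\ne i}x_j-\beta_2\sum_{j\ne i}x_ix_j,$$ equilibria are interior (characterized by first-order conditions), and consider two-period sequential games $\boldsymbol{n}=(n_1,n_2)$ with $n_1\ge1$, $n_2\ge0$. Suppose the Stackelberg independence property is non-trivially satisfied for all $(n_1,n_2)$, i.e. the total equilibrium quantity of the period-1 firms is independent of $n_2$ for every $n_1$ and is not identically zero (with $\alpha_1\neq 0$ and $\alpha_2\ne\beta_2$). Then $\alpha_2=2\beta_2$ and $\beta_1=0$, so that (up to the irrelevant constant $\alpha_0$) $\pi_i(\boldsymbol{x})=x_i\,a(\overline{X}_c-X)$ with $a=\beta_2$, $\overline{X}_c=\alpha_1/\beta_2$, and $X=\sum_jx_j$.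
   Context: Two-period sequential game: the $n_1$ firms of period 1 choose quantities simultaneously; the $n_2$ firms of period 2 observe the period-1 total $X_1$ and then choose simultaneously; equilibrium is subgame perfect. Stackelberg independence here means the period-1 firms' equilibrium choices do not depend on $n_2$. *)

From Stdlib Require Import Reals List Arith.
Open Scope R_scope.

Definition sumR (l : list nat) (f : nat -> R) : R :=
  fold_right (fun j acc => f j + acc) 0 l.

Definition others (n i : nat) : list nat :=
  filter (fun j => negb (Nat.eqb j i)) (seq 0 n).

Definition total (n : nat) (x : nat -> R) : R := sumR (seq 0 n) x.

Definition payoff (a0 a1 a2 b1 b2 : R) (n : nat) (x : nat -> R) (i : nat) : R :=
  a0 + a1 * x i - a2 / 2 * (x i) ^ 2
  + b1 * sumR (others n i) x
  - b2 * sumR (others n i) (fun j => x i * x j).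

Definition upd (x : nat -> R) (i : nat) (v : R) : nat -> R :=
  fun j => if Nat.eqb j i then v else x j.

(* In the game (n1,n2), firms 0..n1-1 move in period 1, firms n1..n1+n2-1 in
   period 2.  The full profile built from period-1 quantities y and period-2
   quantities z (only indices >= n1 of z matter). *)
Definition profile (n1 : nat) (y z : nat -> R) : nat -> R :=
  fun j => if Nat.ltb j n1 then y j else z j.

(* Period-2 strategies: sigma X1 gives the period-2 quantities after observing
   the period-1 total X1.  Equilibrium in every subgame (interior, i.e.
   characterized by the first-order conditions). *)
Definition stage2_eq (a0 a1 a2 b1 b2 : R) (n1 n2 : nat)
    (sigma : R -> nat -> R) : Prop :=
  forall (y : nat -> R) (i : nat), (n1 <= i < n1 + n2)%nat ->
    let x := profile n1 y (sigma (total n1 y)) in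
    derivable_pt_lim (fun v => payoff a0 a1 a2 b1 b2 (n1 + n2) (upd x i v) i)
      (x i) 0.

Definition spe (a0 a1 a2 b1 b2 : R) (n1 n2 : nat)
    (y : nat -> R) (sigma : R -> nat -> R) : Prop :=
  stage2_eq a0 a1 a2 b1 b2 n1 n2 sigma /\
  forall i : nat, (i < n1)%nat ->
    derivable_pt_lim
      (fun v => let y' := upd y i v in
                payoff a0 a1 a2 b1 b2 (n1 + n2)
                  (profile n1 y' (sigma (total n1 y'))) i)
      (y i) 0.

From Stdlib Require Import Reals List Arith Lra Lia.
From Coquelicot Require Import Coquelicot.
Open Scope R_scope.

(* A firm's payoff depends on the others' quantities only through their sum [S],
   so each first-order condition is linear.  When a single firm moves in period 2
   its best response to the period-1 total [X1] is [(a1 - b2 X1) / a2]; a leader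
   anticipating it faces an affine [S], and summing the leaders' conditions gives
   one equation in the period-1 total for each game.  Equating that total across
   the games (1,0), (1,1) and across (2,0), (2,1) yields [b1 = Q1 (2 b2 - a2)]
   and [2 b1 = Q2 (2 b2 - a2)], with [a1 = a2 Q1] and [2 a1 = (a2 + b2) Q2];
   if [a2 <> 2 b2] these force [a1 = 0]. *)

Lemma sumR_app (l1 l2 : list nat) (f : nat -> R) :
  sumR (l1 ++ l2) f = sumR l1 f + sumR l2 f.
Proof. unfold sumR. induction l1 as [|j l1 IH]; cbn; [ring | rewrite IH; ring]. Qed.

Lemma sumR_scal (l : list nat) (f : nat -> R) (c : R) :
  sumR l (fun j => c * f j) = c * sumR l f.
Proof. unfold sumR. induction l as [|j l IH]; cbn; [ring | rewrite IH; ring]. Qed.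

Lemma sumR_ext_in (l : list nat) (f g : nat -> R) :
  (forall j, In j l -> f j = g j) -> sumR l f = sumR l g.
Proof.
unfold sumR. induction l as [|j l IH]; intros Hfg; cbn; [reflexivity|].
rewrite (Hfg j (or_introl eq_refl)).
rewrite IH by (intros k Hk; apply Hfg; now right). reflexivity.
Qed.

Lemma sumR_filter_split (l : list nat) (f : nat -> R) (p : nat -> bool) :
  sumR l f = sumR (filter p l) f + sumR (filter (fun j => negb (p j)) l) f.
Proof.
unfold sumR. induction l as [|j l IH]; cbn; [ring|].
destruct (p j); cbn; rewrite IH; ring.
Qed.

Lemma filter_id_in (p : nat -> bool) (l : list nat) :
  (forall j, In j l -> p j = true) -> filter p l = l.
Proof.
intros Hp. rewrite (filter_ext_in p (fun _ => true)) by exact Hp.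
clear Hp. induction l as [|j l IH]; cbn; [reflexivity | now rewrite IH].
Qed.

Lemma filter_eqb_seq (n i : nat) :
  (i < n)%nat -> filter (fun j => Nat.eqb j i) (seq 0 n) = i :: nil.
Proof.
intros Hi. induction n as [|n IH]; [lia|].
rewrite seq_S, filter_app. cbn. destruct (Nat.eqb_spec n i) as [->|Hne].
- rewrite (filter_ext_in _ (fun _ => false)), filter_false; [reflexivity|].
  intros j Hj. apply in_seq in Hj. apply Nat.eqb_neq. lia.
- rewrite IH by lia. reflexivity.
Qed.

Lemma total_split (n : nat) (x : nat -> R) (i : nat) :
  (i < n)%nat -> total n x = x i + sumR (others n i) x.
Proof.
intros Hi. unfold total, others.
rewrite (sumR_filter_split _ _ (fun j => Nat.eqb j i)), filter_eqb_seq by exact Hi.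
cbn. ring.
Qed.

Lemma total_S (n : nat) (x : nat -> R) : total (S n) x = total n x + x n.
Proof. unfold total. rewrite seq_S, sumR_app. cbn. ring. Qed.

Lemma others_app (n1 n2 i : nat) :
  (i < n1)%nat -> others (n1 + n2) i = others n1 i ++ seq n1 n2.
Proof.
intros Hi. unfold others. rewrite seq_app, filter_app. f_equal.
apply filter_id_in. intros j Hj. apply in_seq in Hj.
apply Bool.negb_true_iff, Nat.eqb_neq. lia.
Qed.

Lemma others_last (n : nat) : others (S n) n = seq 0 n.
Proof.
unfold others. rewrite seq_S, filter_app. cbn. rewrite Nat.eqb_refl, app_nil_r.
apply filter_id_in. intros j Hj. apply in_seq in Hj.
apply Bool.negb_true_iff, Nat.eqb_neq. lia.
Qed.

Lemma sum_of_focs (n : nat) (y : nat -> R) (c d e : R) :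
  (forall i, (i < n)%nat -> d * y i + e = c) ->
  d * total n y + INR n * e = INR n * c.
Proof.
induction n as [|n IH]; intros Hfoc.
- unfold total. cbn. ring.
- rewrite total_S, S_INR.
  replace (d * (total n y + y n) + (INR n + 1) * e)
    with ((d * total n y + INR n * e) + (d * y n + e)) by ring.
  rewrite (IH (fun i Hi => Hfoc i ltac:(lia))), (Hfoc n) by lia. ring.
Qed.

Section Payoffs.

Variables a0 a1 a2 b1 b2 : R.

Definition own_payoff (v S : R) : R :=
  a0 + a1 * v - a2 / 2 * v ^ 2 + b1 * S - b2 * v * S.

Lemma payoff_own (n : nat) (x : nat -> R) (i : nat) :
  payoff a0 a1 a2 b1 b2 n x i = own_payoff (x i) (sumR (others n i) x).
Proof. unfold payoff, own_payoff. rewrite sumR_scal. ring. Qed.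

Lemma others_upd (n i : nat) (x : nat -> R) (v : R) :
  sumR (others n i) (upd x i v) = sumR (others n i) x.
Proof.
apply sumR_ext_in. intros j Hj. unfold others in Hj. apply filter_In in Hj.
unfold upd. destruct (Nat.eqb j i); [discriminate (proj2 Hj) | reflexivity].
Qed.

Lemma follower_deviation_payoff (n1 : nat) (y z : nat -> R) (v : R) :
  payoff a0 a1 a2 b1 b2 (n1 + 1) (upd (profile n1 y z) n1 v) n1
  = own_payoff v (total n1 y).
Proof.
rewrite payoff_own, others_upd, Nat.add_1_r, others_last.
unfold upd. rewrite Nat.eqb_refl. f_equal.
apply sumR_ext_in. intros j Hj. apply in_seq in Hj.
unfold profile. destruct (Nat.ltb_spec j n1); [reflexivity | lia].
Qed.

Lemma leader_deviation_payoff (n1 n2 : nat) (y z : nat -> R) (i : nat) (v : R) :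
  (i < n1)%nat ->
  payoff a0 a1 a2 b1 b2 (n1 + n2) (profile n1 (upd y i v) z) i
  = own_payoff v (sumR (others n1 i) y + sumR (seq n1 n2) z).
Proof.
intros Hi. rewrite payoff_own, others_app, sumR_app by exact Hi.
unfold profile at 1. destruct (Nat.ltb_spec i n1); [|lia].
unfold upd at 1. rewrite Nat.eqb_refl. f_equal. f_equal.
- rewrite <- (others_upd n1 i y v). apply sumR_ext_in. intros j Hj.
  unfold others in Hj. apply filter_In in Hj. destruct Hj as [Hj _].
  apply in_seq in Hj. unfold profile. destruct (Nat.ltb_spec j n1); [reflexivity | lia].
- apply sumR_ext_in. intros j Hj. apply in_seq in Hj.
  unfold profile. destruct (Nat.ltb_spec j n1); [lia | reflexivity].
Qed.

Lemma own_payoff_affine_derive (p q v : R) :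
  derivable_pt_lim (fun w => own_payoff w (p + q * w)) v
    (a1 - a2 * v + b1 * q - b2 * (p + 2 * q * v)).
Proof.
apply is_derive_Reals. unfold own_payoff.
auto_derive; [exact I | field].
Qed.

Lemma own_payoff_foc (p q v l : R) :
  derivable_pt_lim (fun w => own_payoff w (p + q * w)) v l ->
  l = a1 - a2 * v + b1 * q - b2 * (p + 2 * q * v).
Proof. intros Hl. exact (uniqueness_limite _ _ _ _ Hl (own_payoff_affine_derive p q v)). Qed.

Lemma follower_best_response (n1 : nat) (sigma : R -> nat -> R) :
  (1 <= n1)%nat -> a1 <> 0 -> stage2_eq a0 a1 a2 b1 b2 n1 1 sigma ->
  a2 <> 0 /\ forall t, sigma t n1 = (a1 - b2 * t) / a2.
Proof.
intros Hn1 Ha1 Heq.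
assert (Hfoc : forall t, a2 * sigma t n1 = a1 - b2 * t).
{ intros t. set (y := upd (fun _ => 0) 0 t).
  assert (Hy : total n1 y = t).
  { rewrite (total_split n1 y 0) by lia.
    rewrite (sumR_ext_in _ _ (fun j => 0 * y j)), sumR_scal.
    - unfold y, upd. cbn. ring.
    - intros j Hj. unfold others in Hj. apply filter_In in Hj.
      unfold y, upd. destruct (Nat.eqb j 0); [discriminate (proj2 Hj) | ring]. }
  specialize (Heq y n1 ltac:(lia)). cbv zeta in Heq. rewrite Hy in Heq.
  apply (derivable_pt_lim_ext _ (fun w => own_payoff w (total n1 y + 0 * w))) in Heq.
  2: { intros w. rewrite follower_deviation_payoff. f_equal. ring. }
  apply own_payoff_foc in Heq. rewrite Hy in Heq.
  unfold profile in Heq. rewrite Nat.ltb_irrefl in Heq. lra. }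
assert (Ha2 : a2 <> 0).
{ intros E. specialize (Hfoc 0). rewrite E in Hfoc. lra. }
split; [exact Ha2|]. intros t. rewrite <- Hfoc. field. exact Ha2.
Qed.

Lemma simultaneous_total (n1 : nat) (y : nat -> R) (sigma : R -> nat -> R) :
  spe a0 a1 a2 b1 b2 n1 0 y sigma ->
  (a2 + (INR n1 - 1) * b2) * total n1 y = INR n1 * a1.
Proof.
intros [_ Hlead].
rewrite <- (sum_of_focs n1 y a1 (a2 - b2) (b2 * total n1 y)); [ring|].
intros i Hi. specialize (Hlead i Hi).
apply (derivable_pt_lim_ext _ (fun v => own_payoff v (sumR (others n1 i) y + 0 * v))) in Hlead.
2: { intros v. cbv zeta. rewrite leader_deviation_payoff by exact Hi.
     f_equal. cbn. ring. }
apply own_payoff_foc in Hlead. rewrite (total_split n1 y i Hi). lra.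
Qed.

Lemma sequential_total (n1 : nat) (y : nat -> R) (sigma : R -> nat -> R) :
  (1 <= n1)%nat -> a1 <> 0 -> spe a0 a1 a2 b1 b2 n1 1 y sigma ->
  (b2 ^ 2 + a2 * b2 - a2 ^ 2) * total n1 y
  + INR n1 * (a1 * a2 - b1 * b2 - a1 * b2 + (b2 ^ 2 - a2 * b2) * total n1 y) = 0.
Proof.
intros Hn1 Ha1 [Hstage2 Hlead].
destruct (follower_best_response n1 sigma Hn1 Ha1 Hstage2) as [Ha2 Hsigma].
set (X := total n1 y).
enough (Hfoc : forall i, (i < n1)%nat ->
  (b2 ^ 2 + a2 * b2 - a2 ^ 2) * y i
  + (a1 * a2 - b1 * b2 - a1 * b2 + (b2 ^ 2 - a2 * b2) * X) = 0).
{ pose proof (sum_of_focs n1 y 0 _ _ Hfoc) as Hsum. rewrite Rmult_0_r in Hsum.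
  exact Hsum. }
intros i Hi. specialize (Hlead i Hi).
set (S := sumR (others n1 i) y) in Hlead.
(* the follower reacts to the deviating leader's total [v + S] *)
apply (derivable_pt_lim_ext _
  (fun v => own_payoff v ((S + (a1 - b2 * S) / a2) + (- b2 / a2) * v))) in Hlead.
2: { intros v. cbv zeta. rewrite leader_deviation_payoff by exact Hi.
     rewrite (total_split n1 (upd y i v) i Hi), others_upd. fold S.
     unfold upd at 1. rewrite Nat.eqb_refl. cbn. rewrite Hsigma.
     f_equal. field. exact Ha2. }
apply own_payoff_foc in Hlead.
assert (HX : X = y i + S) by exact (total_split n1 y i Hi).
apply (Rmult_eq_compat_l a2) in Hlead. field_simplify in Hlead; [|exact Ha2].
rewrite HX. lra.
Qed.

Lemma payoff_normal_form (n : nat) (x : nat -> R) (i : nat) :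
  a2 = 2 * b2 -> b1 = 0 -> b2 <> 0 -> (i < n)%nat ->
  payoff a0 a1 a2 b1 b2 n x i - a0 = x i * (b2 * (a1 / b2 - total n x)).
Proof.
intros Ha2 Hb1 Hb2 Hi. rewrite payoff_own, (total_split n x i Hi).
unfold own_payoff. rewrite Ha2, Hb1. field. exact Hb2.
Qed.

End Payoffs.

Lemma independence_parameters (a1 a2 b1 b2 Q1 Q2 : R) :
  a1 <> 0 -> b2 <> 0 ->
  a2 * Q1 = a1 ->
  (a2 + b2) * Q2 = 2 * a1 ->
  (b2 ^ 2 + a2 * b2 - a2 ^ 2) * Q1 + (a1 * a2 - b1 * b2 - a1 * b2 + (b2 ^ 2 - a2 * b2) * Q1) = 0 ->
  (b2 ^ 2 + a2 * b2 - a2 ^ 2) * Q2 + 2 * (a1 * a2 - b1 * b2 - a1 * b2 + (b2 ^ 2 - a2 * b2) * Q2) = 0 ->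
  a2 = 2 * b2 /\ b1 = 0.
Proof.
intros Ha1 Hb2 HA HB HC HD.
assert (Hb1 : b2 * (b1 - Q1 * (2 * b2 - a2)) = 0) by (rewrite <- HA in HC; lra).
assert (Hb1' : b2 * (2 * b1 - Q2 * (2 * b2 - a2)) = 0) by nra.
apply Rmult_integral in Hb1 as [|Hb1]; [contradiction|].
apply Rmult_integral in Hb1' as [|Hb1']; [contradiction|].
destruct (Req_dec a2 (2 * b2)) as [Hk|Hk].
- split; [exact Hk|]. rewrite Hk in Hb1. lra.
- exfalso. assert (HQ : Q2 = 2 * Q1).
  { apply (Rmult_eq_reg_r (2 * b2 - a2)); lra. }
  assert (Hb2Q1 : b2 * Q1 = 0) by (rewrite HQ in HB; lra).
  apply Rmult_integral in Hb2Q1 as [|HQ1]; [contradiction|].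
  apply Ha1. rewrite <- HA, HQ1. ring.
Qed.

Theorem proposition5 (a0 a1 a2 b1 b2 : R)
  (ha1 : a1 <> 0) (ha2 : a2 <> b2) (hb2 : b2 <> 0)
  (Q : nat -> R)
  (hindep : forall n1 n2 : nat, (1 <= n1)%nat ->
     exists (y : nat -> R) (sigma : R -> nat -> R),
       spe a0 a1 a2 b1 b2 n1 n2 y sigma /\ total n1 y = Q n1)
  (hnontriv : exists n1 : nat, (1 <= n1)%nat /\ Q n1 <> 0) :
  a2 = 2 * b2 /\ b1 = 0 /\
  (forall (n : nat) (x : nat -> R) (i : nat), (i < n)%nat ->
     payoff a0 a1 a2 b1 b2 n x i - a0 = x i * (b2 * (a1 / b2 - total n x))).
Proof.
destruct (hindep 1%nat 0%nat ltac:(lia)) as (yA & sA & HA & QA).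
destruct (hindep 2%nat 0%nat ltac:(lia)) as (yB & sB & HB & QB).
destruct (hindep 1%nat 1%nat ltac:(lia)) as (yC & sC & HC & QC).
destruct (hindep 2%nat 1%nat ltac:(lia)) as (yD & sD & HD & QD).
apply simultaneous_total in HA, HB.
apply sequential_total in HC, HD; try lia; try exact ha1.
rewrite QA in HA. rewrite QB in HB. rewrite QC in HC. rewrite QD in HD.
cbn in HA, HB, HC, HD.
destruct (independence_parameters a1 a2 b1 b2 (Q 1%nat) (Q 2%nat) ha1 hb2)
  as [Ha2 Hb1]; try lra.
split; [exact Ha2 | split; [exact Hb1|]].
intros n x i Hi. exact (payoff_normal_form a0 a1 a2 b1 b2 n x i Ha2 Hb1 hb2 Hi).
Qed.
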